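(* Let $f:2^{\mathcal{E}_x}\to\mathbb{R}_{\ge 0}$ be normalized, monotone and submodular, and consider $(\mathrm{P}_1)$ under the constraint TU$_b$ (i.e., maximize $f(\mathcal{E})$ over $\mathcal{E}\subseteq\mathcal{E}_x$ with $|\mathcal{E}|\le k$ and some vertex cover $\mathcal{V}$ of $\mathcal{E}$ with $|\mathcal{V}|\le b$), with optimal value $\mathrm{OPT}_1$. Then the algorithm Edge-Greedy (described in the context) returns a feasible solution $\mathcal{E}_{\mathrm{grd}}$ of this problem with $f(\mathcal{E}_{\mathrm{grd}})\ge\alpha_e(b,k)\cdot\mathrm{OPT}_1$, where $\alpha_e(b,k)=1-\exp\big(-\min\{1,b/k\}\big)$.
   Context: $\mathcal{G}=(\mathcal{V}_x,\mathcal{E}_x)$ is a finite simple undirected graph; $b,k\ge1$ are integers. For $\mathcal{V}\subseteq\mathcal{V}_x$, $\mathsf{edges}(\mathcal{V})$ is the set of edges incident to at least one vertex of $\mathcal{V}$. A set function $h$ is normalized if $h(\varnothing)=0$, monotone if $h(A)\le h(B)$ for $A\subseteq B$, submodular if $h(A)+h(B)\ge h(A\cup B)+h(A\cap B)$. Edge-Greedy: Phase I: start with $\mathcal{E}_{\mathrm{grd}}=\varnothing$; for $\min(b,k)$ iterations (or until no edges remain), add an edge $e^\star\in\arg\max_{e\in\mathcal{E}_x\setminus\mathcal{E}_{\mathrm{grd}}}f(\mathcal{E}_{\mathrm{grd}}\cup\{e\})$. Then let $\mathcal{V}_{\mathrm{grd}}$ be a vertex cover of $\mathcal{E}_{\mathrm{grd}}$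 obtained by choosing one endpoint of each selected edge. Phase II (only if $k>b$): let $\mathcal{E}_{\mathrm{free}}=\mathsf{edges}(\mathcal{V}_{\mathrm{grd}})\setminus\mathcal{E}_{\mathrm{grd}}$; for $\min(|\mathcal{E}_{\mathrm{free}}|,k-b)$ iterations, add an edge $e^\star\in\arg\max_{e\in\mathcal{E}_{\mathrm{free}}\setminus\mathcal{E}_{\mathrm{grd}}}f(\mathcal{E}_{\mathrm{grd}}\cup\{e\})$. Return $(\mathcal{V}_{\mathrm{grd}},\mathcal{E}_{\mathrm{grd}})$. *)

From Stdlib Require Import Reals.
From HB Require Import structures.
From mathcomp Require Import all_boot.

Set Implicit Arguments.
Unset Strict Implicit.
Unset Printing Implicit Defensive.

Section EdgeGreedy.

Variable V : finType.
(* A finite simple undirected graph: a symmetric irreflexive relation g. *)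
Variable g : rel V.

Definition is_edge (A : {set V}) : bool :=
  [exists u, exists v, g u v && (A == [set u; v])].

Definition edge := {A : {set V} | is_edge A}.

Definition incident (v : V) (e : edge) : bool := v \in val e.

Definition vcover (Vc : {set V}) (E : {set edge}) : Prop :=
  forall e, e \in E -> exists2 v, v \in Vc & incident v e.

Definition edges_of (Vc : {set V}) : {set edge} :=
  [set e | [exists v in Vc, incident v e]].

Definition feasible (b k : nat) (E : {set edge}) : Prop :=
  (#|E| <= k)%N /\ exists Vc : {set V}, vcover Vc E /\ (#|Vc| <= b)%N.

Definition feasibleb (b k : nat) (E : {set edge}) : bool :=
  (#|E| <= k)%N &&
  [exists Vc : {set V}, [forall e in E, [exists v in Vc, incident v e]]
                        && (#|Vc| <= b)%N].

Variable f : {set edge} -> R.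

(* OPT_1 := max of f over feasible sets (0 is the value of the feasible
   empty set when f is normalized and nonnegative). *)
Definition OPT1 (b k : nat) : R :=
  foldr Rmax R0 [seq f E | E <- enum [set: {set edge}] & feasibleb b k E].

(* One greedy phase: s is a sequence of successive greedy choices among the
   candidate set C, starting from the current selection S. *)
Fixpoint greedy_seq (C S : {set edge}) (s : seq edge) : Prop :=
  match s with
  | [::] => True
  | x :: s' =>
      x \in C /\ x \notin S /\
      (forall y, y \in C -> y \notin S -> Rle (f (y |: S)) (f (x |: S))) /\
      greedy_seq C (x |: S) s'
  end.

(* A complete run of Edge-Greedy producing (Vgrd, Egrd).
   s1: phase I choices; c: the endpoint chosen for each phase-I edge;
   s2: phase II choices (zero iterations when k <= b since k - b = 0). *)
Definition edge_greedy_run (b k : nat) (s1 : seq edge) (c : edge -> V)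
    (s2 : seq edge) (Vgrd : {set V}) (Egrd : {set edge}) : Prop :=
  let E1 := [set x in s1] in
  let Efree := edges_of Vgrd :\: E1 in
  [/\ greedy_seq setT set0 s1,
      size s1 = minn (minn b k) #|[set: edge]|,
      (forall e, e \in E1 -> incident (c e) e)
    & Vgrd = c @: E1] /\
  [/\ greedy_seq Efree E1 s2,
      size s2 = minn #|Efree| (k - b)
    & Egrd = E1 :|: [set x in s2]].

End EdgeGreedy.

Definition alpha_e (b k : nat) : R :=
  Rminus R1 (exp (Ropp (Rmin R1 (Rdiv (INR b) (INR k))))).

From Stdlib Require Import Reals Lra.
From HB Require Import structures.
From mathcomp Require Import all_boot zify.

Set Implicit Arguments.
Unset Strict Implicit.
Unset Printing Implicit Defensive.
Local Open Scope R_scope.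

(* Phase I is the classical greedy algorithm for a cardinality constraint, run
   for min(b, k) steps.  Against any set O of at most k edges, submodularity
   bounds f O - f S by |O| times the best marginal gain, so each greedy step
   shrinks the gap f O - f S by a factor 1 - 1/k; after min(b, k) steps the gap
   is at most exp(-min(1, b/k)) f O.  Phase I selects at most b edges and its
   chosen endpoints cover them, while phase II adds at most k - b edges that
   are already covered, so the output is feasible, and by monotonicity it is
   worth at least the phase-I set. *)

Section Submodular.

Variable T : finType.
Variable f : {set T} -> R.
Hypothesis f_mono : forall A B : {set T}, A \subset B -> f A <= f B.
Hypothesis f_submod : forall A B : {set T}, f (A :|: B) + f (A :&: B) <= f A + f B.

Lemma submod_setU_seq_le (S : {set T}) (d : R) (s : seq T) :
  (forall o, o \in s -> f (o |: S) - f S <= d) ->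
  f (S :|: [set x in s]) <= f S + INR (size s) * d.
Proof.
elim: s => [|o s IH] gain_le.
  have -> : [set x in [::]] = set0 :> {set T} by apply/setP => y; rewrite !inE.
  rewrite setU0 /=; lra.
have IHs := IH (fun y ys => gain_le y (mem_behead (s := o :: s) ys)).
have gain_o := gain_le o (mem_head _ _).
have splitU : S :|: [set x in o :: s] = (S :|: [set x in s]) :|: (o |: S).
  by apply/setP => y; rewrite !inE; case: (y \in S); case: (y == o); case: (y \in s).
have meetI : f S <= f ((S :|: [set x in s]) :&: (o |: S)).
  by apply: f_mono; apply/subsetIP; split; [exact: subsetUl | exact: subsetUr].
have := f_submod (S :|: [set x in s]) (o |: S).
rewrite splitU; change (size (o :: s)) with (size s).+1; rewrite S_INR; lra.
Qed.

Lemma submod_gap_le_card (S O : {set T}) (d : R) :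
  (forall o, o \in O -> f (o |: S) - f S <= d) ->
  f O - f S <= INR #|O| * d.
Proof.
move=> gain_le.
have gain_enum : forall o, o \in enum O -> f (o |: S) - f S <= d.
  by move=> o; rewrite mem_enum; exact: gain_le.
have := submod_setU_seq_le gain_enum; rewrite set_enum -cardE.
have := f_mono (subsetUr S O); lra.
Qed.

Lemma greedy_step_gap_le (k : nat) (O S : {set T}) (x : T) :
  (1 <= k)%N -> (#|O| <= k)%N ->
  (forall y, y \notin S -> f (y |: S) <= f (x |: S)) ->
  f O - f (x |: S) <= (1 - / INR k) * (f O - f S).
Proof.
move=> k_gt0 Ok x_best.
have k_ge1 : 1 <= INR k by apply: (le_INR 1); apply/leP.
pose d := f (x |: S) - f S.
have d_ge0 : 0 <= d by have := f_mono (subsetUr [set x] S); rewrite /d; lra.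
have gain_le : forall o, o \in O -> f (o |: S) - f S <= d.
  move=> o _; case oS: (o \in S).
    have -> : o |: S = S by apply/setUidPr; rewrite sub1set oS.
    lra.
  by have := x_best o (negbT oS); rewrite /d; lra.
have gap_le : f O - f S <= INR k * d.
  have Ok_R : INR #|O| <= INR k by apply: le_INR; apply/leP.
  have := submod_gap_le_card gain_le; have := Rmult_le_compat_r d _ _ d_ge0 Ok_R.
  lra.
have gap_div : (f O - f S) * / INR k <= d.
  apply: (Rmult_le_reg_l (INR k)); first lra.
  by rewrite -Rmult_assoc (Rmult_comm (INR k)) Rmult_assoc Rinv_r; lra.
rewrite /d in gap_div; lra.
Qed.

End Submodular.

Lemma exp_le_exp (x y : R) : x <= y -> exp x <= exp y.
Proof.
case/Rle_lt_or_eq_dec => [lt_xy | ->]; last exact: Rle_refl.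
by left; apply: exp_increasing.
Qed.

Lemma exp_pow (x : R) (n : nat) : exp x ^ n = exp (INR n * x).
Proof.
elim: n => [|n IH]; first by rewrite /= Rmult_0_l exp_0.
by rewrite [LHS]/= IH -exp_plus S_INR; f_equal; ring.
Qed.

Lemma pow_one_sub_inv_le_exp (k n : nat) : (1 <= k)%N ->
  (1 - / INR k) ^ n <= exp (- (INR n / INR k)).
Proof.
move=> k_gt0; have k_ge1 : 1 <= INR k by apply: (le_INR 1); apply/leP.
have inv_le1 : / INR k <= 1 by rewrite -Rinv_1; apply: Rinv_le_contravar; lra.
apply: Rle_trans (_ : exp (- / INR k) ^ n <= _).
  by apply: pow_incr; split; [lra | have := exp_ineq1_le (- / INR k); lra].
by rewrite exp_pow; right; f_equal; rewrite /Rdiv; ring.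
Qed.

Lemma Rmin_one_div_le_minn (b k : nat) : (1 <= k)%N ->
  Rmin 1 (INR b / INR k) <= INR (minn b k) / INR k.
Proof.
move=> k_gt0; have k_ge1 : 1 <= INR k by apply: (le_INR 1); apply/leP.
case: leqP => _; first exact: Rmin_r.
by rewrite /Rdiv Rinv_r; [exact: Rmin_l | lra].
Qed.

Lemma alpha_eE (b k : nat) : alpha_e b k = 1 - exp (- Rmin 1 (INR b / INR k)).
Proof. by []. Qed.

Lemma alpha_e_bounds (b k : nat) : (1 <= k)%N -> 0 <= alpha_e b k <= 1.
Proof.
move=> k_gt0; have k_ge1 : 1 <= INR k by apply: (le_INR 1); apply/leP.
rewrite alpha_eE; set m := Rmin 1 (INR b / INR k).
have m_ge0 : 0 <= m.
  apply: Rmin_glb; first lra.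
  by apply: Rmult_le_pos; [exact: pos_INR | left; apply: Rinv_0_lt_compat; lra].
have : exp (- m) <= exp 0 by apply: exp_le_exp; lra.
have := exp_pos (- m); rewrite exp_0; lra.
Qed.

Lemma pow_one_sub_inv_minn_le (b k : nat) : (1 <= k)%N ->
  (1 - / INR k) ^ minn b k <= 1 - alpha_e b k.
Proof.
move=> k_gt0; rewrite alpha_eE.
have := exp_le_exp (Ropp_le_contravar _ _ (Rmin_one_div_le_minn b k_gt0)).
have := pow_one_sub_inv_le_exp (minn b k) k_gt0.
lra.
Qed.

Lemma Rmult_foldr_Rmax_le (A : Type) (h : A -> R) (a c : R) (l : seq A) :
  0 <= a -> 0 <= c -> (forall x, List.In x l -> a * h x <= c) ->
  a * foldr Rmax 0 (map h l) <= c.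
Proof.
move=> a_ge0 c_ge0; elim: l => [|x l IH] hl_le /=; first lra.
have := hl_le x (or_introl erefl).
have := IH (fun y yl => hl_le y (or_intror yl)).
by rewrite /Rmax; case: Rle_dec; lra.
Qed.

Section EdgeGreedyAnalysis.

Variables (V : finType) (g : rel V) (f : {set edge g} -> R).
Hypothesis f_mono : forall A B : {set edge g}, A \subset B -> f A <= f B.
Hypothesis f_submod :
  forall A B : {set edge g}, f (A :|: B) + f (A :&: B) <= f A + f B.

Lemma greedy_seqP (C S : {set edge g}) (s : seq (edge g)) :
  greedy_seq f C S s -> [/\ uniq s, all [predC S] s & all [in C] s].
Proof.
elim: s S => [|x s IH] S //= [xC [xS [_ /IH [uniq_s s_notin s_in]]]].
have x_notin_s : x \notin s.
  by apply/negP => xs; move/allP: s_notin => /(_ x xs); rewrite /= setU11.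
rewrite uniq_s xC xS s_in x_notin_s; split=> //.
by apply/allP => y ys; move/allP: s_notin => /(_ y ys); rewrite /= !inE; case/norP.
Qed.

Lemma greedy_seq_gap_le (k : nat) (O S : {set edge g}) (s : seq (edge g)) :
  (1 <= k)%N -> (#|O| <= k)%N -> greedy_seq f setT S s ->
  f O - f (S :|: [set x in s]) <= (1 - / INR k) ^ size s * (f O - f S).
Proof.
move=> k_gt0 Ok; have k_ge1 : 1 <= INR k by apply: (le_INR 1); apply/leP.
have inv_le1 : / INR k <= 1 by rewrite -Rinv_1; apply: Rinv_le_contravar; lra.
elim: s S => [|x s IH] S /=.
  move=> _; have -> : [set x in [::]] = set0 :> {set edge g}.
    by apply/setP => y; rewrite !inE.
  rewrite setU0; lra.
move=> [_ [_ [x_best /IH gap_s]]].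
have -> : S :|: [set y in x :: s] = (x |: S) :|: [set y in s].
  by apply/setP => y; rewrite !inE; case: (y \in S); case: (y == x); case: (y \in s).
have step := greedy_step_gap_le f_mono f_submod k_gt0 Ok
  (fun y yS => x_best y (in_setT y) yS).
have pow_ge0 : 0 <= (1 - / INR k) ^ size s by apply: pow_le; lra.
apply: Rle_trans gap_s (Rle_trans _ _ _ (Rmult_le_compat_l _ _ _ pow_ge0 step) _).
by right; rewrite /=; ring.
Qed.

Lemma edge_greedy_run_feasible b k s1 c s2 Vgrd Egrd :
  edge_greedy_run f b k s1 c s2 Vgrd Egrd -> feasible b k Egrd.
Proof.
move=> [[/greedy_seqP [uniq_s1 _ _] sz1 c_incident ->]
        [/greedy_seqP [_ _ s2_free] sz2 ->]].
have card_E1 : #|[set x in s1]| = size s1 by rewrite cardsE; apply/card_uniqP.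
have s1_le : (size s1 <= minn b k)%N by rewrite sz1 geq_minl.
split.
  apply: leq_trans (leq_card_setU _ _) _; rewrite card_E1 cardsE.
  have s2_le : (size s2 <= k - b)%N by rewrite sz2 geq_minr.
  apply: leq_trans (leq_add s1_le (leq_trans (card_size s2) s2_le)) _.
  lia.
exists (c @: [set x in s1]); split.
  move=> e; rewrite inE => /orP [eE1 | es2].
    by exists (c e); [apply: imset_f | exact: c_incident].
  move: es2; rewrite inE => /(allP s2_free); rewrite inE => /andP [_].
  by rewrite inE => /exists_inP [v vV inc]; exists v.
apply: leq_trans (leq_imset_card _ _) _; rewrite card_E1.
by apply: leq_trans s1_le _; exact: geq_minl.
Qed.

Hypothesis f_nonneg : forall E, 0 <= f E.
Hypothesis f_norm : f set0 = 0.

Lemma edge_greedy_phase1_approx b k s1 c s2 Vgrd Egrd (O : {set edge g}) :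
  (1 <= k)%N -> (#|O| <= k)%N ->
  edge_greedy_run f b k s1 c s2 Vgrd Egrd ->
  alpha_e b k * f O <= f [set x in s1].
Proof.
move=> k_gt0 Ok [[G1 sz1 _ _] _].
have [_ alpha_le1] := alpha_e_bounds b k_gt0.
have fO_ge0 := f_nonneg O.
case: (leqP (minn b k) #|[set: edge g]|) => [/minn_idPl | /ltnW/minn_idPr] sz1E;
  rewrite sz1E in sz1.
  have := greedy_seq_gap_le k_gt0 Ok G1.
  rewrite set0U f_norm sz1.
  have := Rmult_le_compat_r _ _ _ fO_ge0 (pow_one_sub_inv_minn_le b k_gt0).
  lra.
have [uniq_s1 _ _] := greedy_seqP G1.
have -> : [set x in s1] = setT.
  by apply/eqP; rewrite eqEcard subsetT /= [#|[set x in s1]|]cardsE (card_uniqP uniq_s1) sz1.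
apply: Rle_trans (f_mono (subsetT O)).
by have := Rmult_le_compat_r _ _ _ fO_ge0 alpha_le1; lra.
Qed.

End EdgeGreedyAnalysis.

Theorem lemma3 (V : finType) (g : rel V)
  (g_sym : symmetric g) (g_irr : irreflexive g)
  (b k : nat) (hb : (1 <= b)%N) (hk : (1 <= k)%N)
  (f : {set edge g} -> R)
  (f_nonneg : forall E, Rle R0 (f E))
  (f_norm : f set0 = R0)
  (f_mono : forall A B : {set edge g}, A \subset B -> Rle (f A) (f B))
  (f_submod : forall A B : {set edge g},
      Rle (Rplus (f (A :|: B)) (f (A :&: B))) (Rplus (f A) (f B)))
  (s1 : seq (edge g)) (c : edge g -> V) (s2 : seq (edge g))
  (Vgrd : {set V}) (Egrd : {set edge g}) :
  edge_greedy_run f b k s1 c s2 Vgrd Egrd ->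
  feasible b k Egrd /\ Rle (Rmult (alpha_e b k) (OPT1 f b k)) (f Egrd).
Proof.
move=> run; split; first exact: edge_greedy_run_feasible run.
have E1_le : f [set x in s1] <= f Egrd.
  by case: run => _ [_ _ ->]; apply: f_mono; exact: subsetUl.
have [alpha_ge0 _] := alpha_e_bounds b hk.
apply: Rmult_foldr_Rmax_le => // O /List.filter_In [_ /andP [Ok _]].
exact: Rle_trans (edge_greedy_phase1_approx f_mono f_submod f_nonneg f_norm hk Ok run) E1_le.
Qed.
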